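(* Let $r\ge 1$, let $M=(v_1,\dots,v_n)$ be a finite list of nonzero vectors generating $\mathbb{F}_2^r$, and let $G=G(\mathbb{F}_2^r,M)$. Let $c_1(G)$ be the largest invariant factor (the exponent) of the sandpile group $K(G)$. Then $$c_1(G)\ \Big|\ 2^{r-2}\operatorname{lcm}\{\lambda_u : u\in\mathbb{F}_2^r\setminus\{0\}\},$$ where $\lambda_u=n-\sum_{i=1}^n(-1)^{u\cdot v_i}$.
   Context: The Cayley graph $G$ has vertex set $\mathbb{F}_2^r$ and Laplacian $L(G)$ indexed by $\mathbb{F}_2^r$ with $L(G)_{u,u}=n$ and $L(G)_{u,w}=-\#\{i:u+v_i=w\}$ for $u\ne w$; $\operatorname{coker}L(G)\cong\mathbb{Z}\oplus K(G)$ with $K(G)$ finite abelian (the sandpile group). The numbers $\lambda_u$, $u\in\mathbb{F}_2^r$, are the eigenvalues of $L(G)$ (with eigenvector $\sum_{w}(-1)^{u\cdot w}e_w$); $\lambda_0=0$ and $\lambda_u=2\#\{i: u\cdot v_i=1\}>0$ for $u\neq0$, so the right-hand side is an integer. *)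

From HB Require Import structures.
From mathcomp Require Import all_boot all_order all_algebra.
Set Implicit Arguments. Unset Strict Implicit. Unset Printing Implicit Defensive.
Import Order.TTheory GRing.Theory Num.Theory.
Local Open Scope ring_scope.

Notation F2vec r := 'rV['F_2]_r.

Definition dot2 (r : nat) (u w : F2vec r) : 'F_2 := (u *m w^T) 0 0.

Definition cayley_laplacian (r n : nat) (v : 'I_n -> F2vec r)
  (u w : F2vec r) : int :=
  if u == w then n%:Z else - (#|[set i : 'I_n | u + v i == w]|%:Z).

Definition in_image (r n : nat) (v : 'I_n -> F2vec r) (x : F2vec r -> int) :=
  exists y : F2vec r -> int,
    forall u, x u = \sum_(w : F2vec r) cayley_laplacian v u w * y w.

(* the class of x in coker L is torsion, i.e. lies in K(G) *)
Definition is_torsion (r n : nat) (v : 'I_n -> F2vec r) (x : F2vec r -> int) :=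
  exists m : nat, (0 < m)%N /\ in_image v (fun u => m%:Z * x u).

Definition annihilates_K (r n : nat) (v : 'I_n -> F2vec r) (e : nat) :=
  forall x : F2vec r -> int, is_torsion v x -> in_image v (fun u => e%:Z * x u).

(* e is the exponent (= largest invariant factor c_1) of K(G) *)
Definition sandpile_exponent (r n : nat) (v : 'I_n -> F2vec r) (e : nat) :=
  [/\ (0 < e)%N, annihilates_K v e &
      forall e', (0 < e')%N -> annihilates_K v e' -> (e <= e')%N].

Definition lambda (r n : nat) (v : 'I_n -> F2vec r) (u : F2vec r) : int :=
  n%:Z - \sum_(i < n) (-1) ^+ (dot2 u (v i) == 1).

Definition lcm_lambda (r n : nat) (v : 'I_n -> F2vec r) : nat :=
  \big[lcmn/1%N]_(u : F2vec r | u != 0) `|lambda v u|%N.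

From HB Require Import structures.
From mathcomp Require Import all_boot all_order all_algebra.
From mathcomp Require Import zify ring.
From Stdlib Require Classical_Prop Wf_nat.
Set Implicit Arguments. Unset Strict Implicit. Unset Printing Implicit Defensive.
Import Order.TTheory GRing.Theory Num.Theory.
Local Open Scope ring_scope.

(* For u <> 0 the character z |-> (-1)^(u.z) is an eigenvector of L with
   eigenvalue lambda_u = 2 k_u, where k_u = #{i | u.v_i = 1}, so L maps the
   indicator [u.z = 1] to -k_u (-1)^(u.z).  With M = lcm(lambda)/2, the function
   y_g(z) = sum_u [u.g = 1] (M / k_u) [u.z = 1] hence satisfies, by orthogonality
   of characters, L y_g = 2^(r-1) M (e_g - e_0).  A torsion class x has total sum
   0, so x = sum_g x_g (e_g - e_0) and 2^(r-1) M x = L (sum_g x_g y_g).  Thus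
   2^(r-1) M annihilates K(G), and the exponent divides it because annihilators
   are closed under gcd. *)

Lemma F2_cases (x : 'F_2) : x = 0 \/ x = 1.
Proof. by case: x => [[|[|m]] //= ?]; [left | right]; apply/val_inj. Qed.

Lemma F2_neq0 (x : 'F_2) : x != 0 -> x = 1.
Proof. by case: (F2_cases x) => ->. Qed.

Lemma F2_addr_eq1 (x y : 'F_2) : (x + y == 1) = (x == 1) (+) (y == 1).
Proof. by case: (F2_cases x) => ->; case: (F2_cases y) => ->. Qed.

Lemma addvv_F2 (V : lmodType 'F_2) (x : V) : x + x = 0.
Proof.
by rewrite -mulr2n -scaler_nat (_ : 2%:R = 0 :> 'F_2) ?scale0r //; apply/val_inj.
Qed.

Lemma oppv_F2 (V : lmodType 'F_2) (x : V) : - x = x.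
Proof. by apply/eqP; rewrite eq_sym -addr_eq0 addvv_F2. Qed.

Lemma addv_eq0_F2 (V : lmodType 'F_2) (x y : V) : (x + y == 0) = (x == y).
Proof. by rewrite addr_eq0 oppv_F2. Qed.

Lemma dot2C r (u w : F2vec r) : dot2 u w = dot2 w u.
Proof. by rewrite /dot2 -[w *m _]trmxK trmx_mul trmxK [RHS]mxE. Qed.

Lemma dot2Dr r (u w z : F2vec r) : dot2 u (w + z) = dot2 u w + dot2 u z.
Proof. by rewrite /dot2 linearD mulmxDr mxE. Qed.

Lemma dot2Dl r (u w z : F2vec r) : dot2 (w + z) u = dot2 w u + dot2 z u.
Proof. by rewrite dot2C dot2Dr !(dot2C u). Qed.

Lemma dot20r r (u : F2vec r) : dot2 u 0 = 0.
Proof. by rewrite /dot2 trmx0 mulmx0 mxE. Qed.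

Lemma dot20l r (u : F2vec r) : dot2 0 u = 0.
Proof. by rewrite dot2C dot20r. Qed.

Lemma dot2_sumr r (I : finType) (P : pred I) (u : F2vec r) (w : I -> F2vec r) :
  dot2 u (\sum_(i | P i) w i) = \sum_(i | P i) dot2 u (w i).
Proof. exact: (big_morph _ (dot2Dr u) (dot20r u)). Qed.

Lemma dot2_nondegenerate r (u : F2vec r) : u != 0 -> exists w, dot2 u w = 1.
Proof.
move=> u0; have [j uj] : exists j, u 0 j != 0.
  apply/existsP; apply: contraR u0; rewrite negb_exists => /forallP u0.
  by apply/eqP/matrixP => i k; rewrite ord1 !mxE; apply/eqP/negbNE/u0.
by exists (delta_mx 0 j); rewrite (dot2C u) /dot2 -rowE !mxE; apply: F2_neq0.
Qed.

Definition ind (b : bool) : int := if b then 1 else 0.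
Definition sgn (b : bool) : int := (-1) ^+ b.

Lemma card_F2vec r : #|{: F2vec r}| = (2 ^ r)%N.
Proof. by rewrite card_mx card_Fp // mul1n. Qed.

Lemma sum_sgn_dot2 r (w : F2vec r) :
  \sum_(u : F2vec r) sgn (dot2 u w == 1) = (2 ^ r)%N%:Z * ind (w == 0).
Proof.
have [->|w0] := eqVneq w 0.
  under eq_bigr do rewrite dot20r /sgn /= expr0.
  by rewrite sumr_const card_F2vec natz mulr1.
have [u0 wu0] := dot2_nondegenerate w0.
set S := \sum_u _; suff : S = - S by rewrite /ind mulr0; lia.
rewrite {1}/S (reindex_inj (addIr u0)) -sumrN; apply: eq_bigr => u _.
rewrite dot2Dl (dot2C u0) wu0 F2_addr_eq1 eqxx addbT /sgn.
by case: (dot2 u w == 1); rewrite ?expr0 ?expr1 ?opprK.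
Qed.

Lemma sum_ind_sgn_dot2 r (g w : F2vec r) : (1 <= r)%N ->
  \sum_(u : F2vec r) ind (dot2 u g == 1) * sgn (dot2 u w == 1)
  = (2 ^ (r - 1))%N%:Z * (ind (w == 0) - ind (w == g)).
Proof.
move=> r_gt0; apply: (@mulfI _ 2) => //; rewrite mulr_sumr.
have ind_sgn b c : 2 * (ind b * sgn c) = sgn c - sgn (b (+) c).
  by case: b; case: c; rewrite /sgn /= ?expr0 ?expr1.
under eq_bigr do rewrite ind_sgn -F2_addr_eq1 -dot2Dr.
rewrite sumrB !sum_sgn_dot2 addv_eq0_F2 (eq_sym g).
have -> : (2 ^ r = 2 * 2 ^ (r - 1))%N by rewrite -expnS subn1 prednK.
by rewrite PoszM; ring.
Qed.

Lemma sum_ind_card n (P : pred 'I_n) :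
  \sum_(i < n) ind (P i) = #|[set i | P i]|%:Z.
Proof.
apply/esym; rewrite -sum1dep_card -natz natr_sum big_mkcond /=.
by apply: eq_bigr => i _; case: (P i).
Qed.

Lemma sum_ind_eq (T : finType) (a : T) (y : T -> int) :
  \sum_(z : T) y z * ind (a == z) = y a.
Proof.
rewrite (bigD1 a) //= eqxx mulr1 big1 ?addr0 // => z /negbTE za.
by rewrite eq_sym za mulr0.
Qed.

Section CayleyLaplacian.

Variables (r n : nat) (v : 'I_n -> F2vec r).

Definition lap (y : F2vec r -> int) (w : F2vec r) : int :=
  \sum_z cayley_laplacian v w z * y z.

Definition nonorth (u : F2vec r) : nat := #|[set i | dot2 u (v i) == 1]|.

Lemma lap_sum (I : finType) (c : I -> int) (f : I -> F2vec r -> int) w :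
  lap (fun z => \sum_i c i * f i z) w = \sum_i c i * lap (f i) w.
Proof.
rewrite /lap; under eq_bigr do rewrite mulr_sumr.
rewrite exchange_big; apply: eq_bigr => i _.
by rewrite mulr_sumr; under eq_bigr do rewrite mulrCA.
Qed.

Lemma lambda_nonorth u : lambda v u = (2 * nonorth u)%:Z.
Proof.
have sgn_ind (b : bool) : (-1) ^+ b = 1 - 2 * ind b :> int.
  by case: b; rewrite ?expr0 ?expr1.
rewrite /lambda; under eq_bigr do rewrite sgn_ind.
by rewrite sumrB sumr_const card_ord -mulr_sumr sum_ind_card PoszM natz; ring.
Qed.

Lemma nonorth_gt0 u :
  (forall x : F2vec r, exists S : {set 'I_n}, x = \sum_(i in S) v i) ->
  u != 0 -> (0 < nonorth u)%N.
Proof.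
move=> v_gen /dot2_nondegenerate [w uw1]; have [S wS] := v_gen w.
apply/card_gt0P; apply/existsP; apply: contraLR isT => /existsPn v_orth.
have : dot2 u w = 0.
  rewrite wS dot2_sumr big1 // => i _.
  by have := v_orth i; rewrite inE; case: (F2_cases (dot2 u (v i))) => ->.
by rewrite uw1 => /eqP; rewrite oner_eq0.
Qed.

(* [cayley_laplacian] puts n on the diagonal even when some v i = 0, so the
   formula below needs the absence of loops. *)
Hypothesis v_neq0 : forall i, v i != 0.

Lemma lapE y w : lap y w = n%:Z * y w - \sum_(i < n) y (w + v i).
Proof.
have entry z : cayley_laplacian v w z
               = n%:Z * ind (w == z) - \sum_(i < n) ind (w + v i == z).
  rewrite /cayley_laplacian sum_ind_card.
  case: eqP => [<-|_]; last by rewrite mulr0 sub0r.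
  suff -> : [set i | w + v i == w] = set0 by rewrite cards0 mulr1 subr0.
  by apply/setP => i; rewrite !inE -subr_eq0 addrAC subrr add0r (negbTE (v_neq0 i)).
rewrite /lap; under eq_bigr do rewrite entry mulrBl mulr_suml.
rewrite sumrB exchange_big /=; congr (_ - _).
  by rewrite -[RHS](sum_ind_eq w (fun z => n%:Z * y z)); apply: eq_bigr => z _; ring.
by apply: eq_bigr => i _; rewrite -(sum_ind_eq _ y); apply: eq_bigr => z _; rewrite mulrC.
Qed.

Lemma cayley_laplacianC u w : cayley_laplacian v u w = cayley_laplacian v w u.
Proof.
rewrite /cayley_laplacian eq_sym; case: eqP => // _.
suff -> : [set i | u + v i == w] = [set i | w + v i == u] by [].
apply/setP => i; rewrite !inE -(addv_eq0_F2 (u + _)) -(addv_eq0_F2 (w + _)).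
by rewrite addrC addrA addrAC.
Qed.

Lemma sum_cayley_laplacian w : \sum_u cayley_laplacian v u w = 0.
Proof.
have := lapE (fun _ => 1) w; rewrite /lap.
under eq_bigr do rewrite mulr1 cayley_laplacianC.
by move=> ->; rewrite sumr_const card_ord mulr1 -mulr_natr mul1r natz subrr.
Qed.

Lemma lap_ind_dot2 u w :
  lap (fun z => ind (dot2 u z == 1)) w = - (nonorth u)%:Z * sgn (dot2 u w == 1).
Proof.
have ind_addb b c : ind (b (+) c) = ind b + sgn b * ind c.
  by case: b; case: c; rewrite /sgn ?expr0 ?expr1.
rewrite lapE; under eq_bigr do rewrite dot2Dr F2_addr_eq1 ind_addb.
rewrite big_split /= sumr_const card_ord -mulr_sumr sum_ind_card -/(nonorth u).
by rewrite -mulr_natr natz; ring.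
Qed.

Definition green (M : nat) (g z : F2vec r) : int :=
  \sum_u ind (dot2 u g == 1) * (M %/ nonorth u)%:Z * ind (dot2 u z == 1).

Lemma lap_green M g w : (1 <= r)%N -> (forall u, u != 0 -> (nonorth u %| M)%N) ->
  lap (green M g) w = (2 ^ (r - 1) * M)%N%:Z * (ind (w == g) - ind (w == 0)).
Proof.
move=> r_gt0 dvdM; rewrite lap_sum.
have term u :
    ind (dot2 u g == 1) * (M %/ nonorth u)%:Z * lap (fun z => ind (dot2 u z == 1)) w
    = - M%:Z * (ind (dot2 u g == 1) * sgn (dot2 u w == 1)).
  rewrite lap_ind_dot2; have [ug1|_] := eqVneq (dot2 u g) 1; last first.
    by rewrite /ind !mul0r mulr0.
  have u0 : u != 0.
    by apply: contraPneq ug1 => ->; rewrite dot20l => /esym/eqP; rewrite oner_eq0.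
  have divMK : (M %/ nonorth u)%:Z * (nonorth u)%:Z = M%:Z.
    by rewrite -PoszM divnK ?dvdM.
  by rewrite -divMK; ring.
under eq_bigr do rewrite term.
by rewrite -mulr_sumr sum_ind_sgn_dot2 // PoszM; ring.
Qed.

Lemma torsion_sum_eq0 x : is_torsion v x -> \sum_u x u = 0.
Proof.
move=> [m [m_gt0 [y xE]]]; have m_neq0 : m%:Z != 0 by rewrite eqz_nat -lt0n.
have : m%:Z * \sum_u x u = 0.
  rewrite mulr_sumr (eq_bigr _ (fun u _ => xE u)) exchange_big /=.
  by apply: big1 => w _; rewrite -mulr_suml sum_cayley_laplacian mul0r.
by move/eqP; rewrite mulf_eq0 (negbTE m_neq0) => /eqP.
Qed.

Lemma annihilates_green M : (1 <= r)%N -> (forall u, u != 0 -> (nonorth u %| M)%N) ->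
  annihilates_K v (2 ^ (r - 1) * M).
Proof.
move=> r_gt0 dvdM x /torsion_sum_eq0 x_sum0.
exists (fun z => \sum_g x g * green M g z) => u.
rewrite -[RHS]/(lap _ u) lap_sum.
under eq_bigr do rewrite lap_green // mulrCA mulrBr.
by rewrite -mulr_sumr sumrB sum_ind_eq -mulr_suml x_sum0 mul0r subr0.
Qed.

End CayleyLaplacian.

Lemma nonorth_dvd_lcm_lambda r n (v : 'I_n -> F2vec r) u :
  u != 0 -> (2 * nonorth v u %| lcm_lambda v)%N.
Proof. by move=> u0; apply: (biglcmn_sup u) => //; rewrite lambda_nonorth. Qed.

Lemma lcm_lambda_gt0 r n (v : 'I_n -> F2vec r) :
  (forall x : F2vec r, exists S : {set 'I_n}, x = \sum_(i in S) v i) ->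
  (0 < lcm_lambda v)%N.
Proof.
move=> v_gen; apply: (big_ind (fun m => 0 < m)%N) => // [a b|u u0].
  by rewrite lcmn_gt0 => -> ->.
by rewrite lambda_nonorth muln_gt0 nonorth_gt0.
Qed.

Lemma annihilates_K_gcd r n (v : 'I_n -> F2vec r) a b :
  annihilates_K v a -> annihilates_K v b -> annihilates_K v (gcdn a b).
Proof.
move=> ann_a ann_b x tx; have [p [q pqE]] := Bezoutz a b.
have [ya yaE] := ann_a x tx; have [yb ybE] := ann_b x tx.
exists (fun w => p * ya w + q * yb w) => u.
transitivity (p * (a%:Z * x u) + q * (b%:Z * x u)).
  by rewrite mulrA mulrA -mulrDl pqE.
by rewrite yaE ybE !mulr_sumr -big_split; apply: eq_bigr => w _ /=; ring.
Qed.

Lemma sandpile_exponent_dvd r n (v : 'I_n -> F2vec r) c e :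
  sandpile_exponent v c -> (0 < e)%N -> annihilates_K v e -> (c %| e)%N.
Proof.
move=> [c_gt0 ann_c c_min] e_gt0 ann_e.
have le_c_gcd : (c <= gcdn c e)%N.
  by apply: c_min; [rewrite gcdn_gt0 c_gt0 | exact: annihilates_K_gcd].
by apply/gcdn_idPl/eqP; rewrite eqn_leq le_c_gcd dvdn_leq ?dvdn_gcdl.
Qed.

Lemma exists_sandpile_exponent r n (v : 'I_n -> F2vec r) e :
  (0 < e)%N -> annihilates_K v e -> exists c, sandpile_exponent v c.
Proof.
move=> e_gt0 ann_e.
have [c [[[c_gt0 ann_c] c_min] _]] :=
  Wf_nat.dec_inh_nat_subset_has_unique_least_element
    (fun c => (0 < c)%N /\ annihilates_K v c) (fun c => Classical_Prop.classic _)
    (ex_intro _ e (conj e_gt0 ann_e)).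
by exists c; split=> // c' c'_gt0 ann_c'; apply/ssrnat.leP/c_min.
Qed.

Theorem mainTheorem6 (r : nat) (hr : (1 <= r)%N) (n : nat)
  (v : 'I_n -> 'rV['F_2]_r)
  (hnz : forall i, v i != 0)
  (hgen : forall x : 'rV['F_2]_r, exists S : {set 'I_n}, x = \sum_(i in S) v i) :
  (exists e, sandpile_exponent v e) /\
  (forall c1 : nat, sandpile_exponent v c1 ->
     (2 * c1 %| 2 ^ (r - 1) * lcm_lambda v)%N).
Proof.
have [u1 u1_neq0] : exists u : F2vec r, u != 0.
  exists (const_mx 1); apply/eqP => /matrixP/(_ 0 (Ordinal hr)).
  by rewrite !mxE => /eqP; rewrite oner_eq0.
have two_dvd_L : (2 %| lcm_lambda v)%N.
  exact: dvdn_trans (dvdn_mulr _ (dvdnn 2)) (nonorth_dvd_lcm_lambda v u1_neq0).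
set M := (lcm_lambda v %/ 2)%N.
have LE : lcm_lambda v = (2 * M)%N by rewrite mulnC divnK.
have dvdM u : u != 0 -> (nonorth v u %| M)%N.
  by move=> u0; rewrite -(@dvdn_pmul2l 2) // -LE nonorth_dvd_lcm_lambda.
have annE := annihilates_green hnz hr dvdM.
have E_gt0 : (0 < 2 ^ (r - 1) * M)%N.
  by move: (lcm_lambda_gt0 hgen); rewrite LE !muln_gt0 expn_gt0.
split; first exact: exists_sandpile_exponent E_gt0 annE.
move=> c1 /sandpile_exponent_dvd /(_ E_gt0 annE).
by rewrite LE mulnCA dvdn_pmul2l.
Qed.
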